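(* Let $k\ge s\ge1$, let $\tau_1,\dots,\tau_k\in[0,1]$ be distinct, let $\ell_j$ be the Lagrange polynomials of degree $k-1$ on these nodes, and consider the $k$-stage collocation Runge--Kutta method with Butcher matrix $\mathcal A=(\alpha_{ij})$, $\alpha_{ij}=\int_0^{\tau_i}\ell_j(\tau)\,\mathrm{d}\tau$, and weights $\omega_j=\int_0^1\ell_j(\tau)\,\mathrm{d}\tau$. Let $\Omega=\mathrm{diag}(\omega_1,\dots,\omega_k)$ and $\mathcal P_s\in\mathbb R^{k\times s}$ with $(\mathcal P_s)_{ij}=P_j(\tau_i)$. Provided that the quadrature formula $(\omega_i,\tau_i)_{i=1}^k$ is exact for polynomials of degree at least $2s-1$, the Runge--Kutta method with abscissae $\tau_1,\dots,\tau_k$, weights $\omega_1,\dots,\omega_k$ and Butcher matrix $A=\mathcal A\mathcal P_s\mathcal P_s^T\Omega$ is the method HBVM$(k,s)$ based at the abscissae $\{\tau_i\}$, i.e. $\mathcal A\mathcal P_s\mathcal P_s^T\Omega=\mathcal I_s\mathcal P_s^T\Omega$.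
   Context: $P_j(t)=\sqrt{2j-1}\,\hat P_{j-1}(t)$, with $\hat P_{j-1}$ the shifted Legendre polynomial of degree $j-1$ on $[0,1]$, so that $\{P_j\}$ is orthonormal on $[0,1]$. HBVM$(k,s)$ based at the abscissae $\{\tau_i\}$ is the Runge--Kutta method with abscissae $\tau_i$, weights $\omega_i$ and Butcher matrix $\mathcal I_s\mathcal P_s^T\Omega$, where $\mathcal I_s\in\mathbb R^{k\times s}$ has entries $(\mathcal I_s)_{ij}=\int_0^{\tau_i}P_j(x)\,\mathrm{d}x$. *)

From HB Require Import structures.
From mathcomp Require Import all_boot all_order all_algebra.
Set Implicit Arguments. Unset Strict Implicit. Unset Printing Implicit Defensive.
Import Order.TTheory GRing.Theory Num.Theory.
Local Open Scope ring_scope.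

Section Defs.
Variable R : rcfType.

Definition polyint (p : {poly R}) : {poly R} :=
  \poly_(i < (size p).+1) (if i is i'.+1 then p`_i' / (i'.+1)%:R else 0).

Definition pint (p : {poly R}) (a b : R) : R := (polyint p).[b] - (polyint p).[a].

(* Shifted Legendre polynomial of degree n on [0,1] (Rodrigues' formula):
   hatP n = 1/n! d^n/dx^n (x^2 - x)^n. *)
Definition shiftLeg (n : nat) : {poly R} := (('X ^+ 2 - 'X) ^+ n)^`N(n).

(* Orthonormal basis P_j = sqrt(2j-1) hatP_{j-1}, j >= 1. *)
Definition Pj (j : nat) : {poly R} := Num.sqrt ((2 * j - 1)%N%:R) *: shiftLeg j.-1.

Definition lagrange k (tau : 'I_k -> R) (j : 'I_k) : {poly R} :=
  \prod_(m < k | m != j) (('X - (tau m)%:P) * ((tau j - tau m)^-1)%:P).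

Definition colloc_A k (tau : 'I_k -> R) : 'M[R]_k :=
  \matrix_(i, j) pint (lagrange tau j) 0 (tau i).

Definition colloc_w k (tau : 'I_k -> R) (j : 'I_k) : R := pint (lagrange tau j) 0 1.

Definition Omega k (tau : 'I_k -> R) : 'M[R]_k := diag_mx (\row_j colloc_w tau j).

(* (P_s)_{ij} = P_j(tau_i), j = 1..s (0-based index j means P_{j+1}). *)
Definition Pmat k s (tau : 'I_k -> R) : 'M[R]_(k, s) :=
  \matrix_(i, j) (Pj j.+1).[tau i].

Definition Imat k s (tau : 'I_k -> R) : 'M[R]_(k, s) :=
  \matrix_(i, j) pint (Pj j.+1) 0 (tau i).

Definition quad_exact k (tau : 'I_k -> R) (d : nat) : Prop :=
  forall p : {poly R}, (size p <= d.+1)%N ->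
    \sum_(i < k) colloc_w tau i * p.[tau i] = pint p 0 1.

End Defs.

From Pilot Require Import Defs.
From mathcomp Require Import all_boot all_algebra.
From mathcomp Require Import zify.
Import GRing.Theory.
Local Open Scope ring_scope.

(* Row i of the collocation matrix integrates, from 0 to tau_i, the Lagrange
   interpolant of the values it is applied to.  Each P_j with j <= s <= k has
   degree < k, so it coincides with its interpolant on the k distinct nodes,
   whence A P_s = I_s, and the identity follows by multiplying on the right by
   P_s^T Omega. *)

Section Polynomials.
Variable R : rcfType.

Lemma coef_polyint (p : {poly R}) i :
  (polyint p)`_i = if i is i'.+1 then p`_i' / (i'.+1)%:R else 0.
Proof.
rewrite /polyint coef_poly; case: i => [|i] //=.
by case: ltnP => // le_p_i; rewrite nth_default ?mul0r.
Qed.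

Lemma polyint_sum (I : finType) (c : I -> R) (q : I -> {poly R}) :
  polyint (\sum_j c j *: q j) = \sum_j c j *: polyint (q j).
Proof.
apply/polyP => i; rewrite coef_polyint !coef_sum; case: i => [|i].
  by apply/esym/big1 => j _; rewrite coefZ coef_polyint mulr0.
rewrite coef_sum mulr_suml; apply: eq_bigr => j _.
by rewrite !coefZ coef_polyint mulrA.
Qed.

Lemma pint_sum (I : finType) (c : I -> R) (q : I -> {poly R}) a b :
  pint (\sum_j c j *: q j) a b = \sum_j c j * pint (q j) a b.
Proof.
rewrite /pint polyint_sum !horner_sum -sumrB; apply: eq_bigr => j _.
by rewrite !hornerZ mulrBr.
Qed.

Lemma size_shiftLeg n : (size (shiftLeg R n) <= n.+1)%N.
Proof.
rewrite /shiftLeg /nderivn; apply: leq_trans (size_poly _ _) _.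
rewrite leq_subLR; apply: leq_trans (size_poly_exp_leq _ _) _.
have : (size (('X^2 - 'X)%R : {poly R}) <= 3)%N.
  apply: leq_trans (size_polyD _ _) _.
  by rewrite size_polyXn size_polyN size_polyX.
by case: (size _) => [|[|[|[|m]]]] //= _; lia.
Qed.

Lemma size_Pj j : (size (Pj R j.+1) <= j.+1)%N.
Proof. exact: leq_trans (size_scale_leq _ _) (size_shiftLeg _). Qed.

End Polynomials.

Section Interpolation.
Variables (R : rcfType) (k : nat) (tau : 'I_k -> R).
Hypothesis tau_inj : injective tau.

Let node_gap_neq0 (j m : 'I_k) : m != j -> tau j - tau m != 0.
Proof.
move=> mj; rewrite subr_eq0; apply/eqP => /tau_inj /eqP.
by rewrite eq_sym (negbTE mj).
Qed.

Lemma lagrange_node j i : (Defs.lagrange tau j).[tau i] = (i == j)%:R.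
Proof.
rewrite /Defs.lagrange horner_prod; have [->|nij] := eqVneq i j.
  by rewrite big1 // => m mj; rewrite hornerM !hornerE divff ?node_gap_neq0.
by rewrite (bigD1 i) //= hornerM !hornerE subrr !mul0r.
Qed.

Lemma size_lagrange j : (size (Defs.lagrange tau j) <= k)%N.
Proof.
have size_factor m : m != j ->
    size (('X - (tau m)%:P) * (tau j - tau m)^-1%:P) = 2%N.
  move=> mj; rewrite mulrC mul_polyC size_scale ?size_XsubC //.
  by rewrite invr_eq0 node_gap_neq0.
rewrite /Defs.lagrange size_prod => [|m mj]; last first.
  by rewrite -size_poly_eq0 size_factor.
rewrite (eq_bigr _ size_factor) sum_nat_const cardC1 card_ord.
by have := ltn_ord j; lia.
Qed.

Lemma lagrange_interpolation (p : {poly R}) : (size p <= k)%N ->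
  p = \sum_j p.[tau j] *: Defs.lagrange tau j.
Proof.
move=> size_p; apply/eqP; rewrite -subr_eq0; set q := _ - _.
have size_q : (size q <= k)%N.
  apply: leq_trans (size_polyD _ _) _; rewrite size_polyN geq_max size_p /=.
  apply: leq_trans (size_sum _ _ _) _; apply/bigmax_leqP => j _.
  exact: leq_trans (size_scale_leq _ _) (size_lagrange _).
have roots_q : all (root q) (map tau (enum 'I_k)).
  apply/allP => _ /mapP [i _ ->]; rewrite /root /q hornerD hornerN horner_sum.
  rewrite (bigD1 i) //= big1 ?hornerZ ?lagrange_node ?eqxx ?mulr1 ?addr0 ?subrr //.
  by move=> j ji; rewrite hornerZ lagrange_node eq_sym (negbTE ji) mulr0.
apply: contraTT size_q => q_neq0; rewrite -ltnNge.
have := max_poly_roots q_neq0 roots_q.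
by rewrite map_inj_uniq ?enum_uniq // size_map size_enum_ord; apply.
Qed.

Lemma colloc_A_exact (p : {poly R}) i : (size p <= k)%N ->
  \sum_j colloc_A tau i j * p.[tau j] = pint p 0 (tau i).
Proof.
move=> size_p; rewrite [in RHS](lagrange_interpolation _ size_p) pint_sum.
by apply: eq_bigr => j _; rewrite mxE mulrC.
Qed.

Lemma colloc_A_mul_Pmat s : (s <= k)%N -> colloc_A tau *m Pmat s tau = Imat s tau.
Proof.
move=> le_s_k; apply/matrixP => i j.
have size_P : (size (Pj R j.+1) <= k)%N.
  exact: leq_trans (size_Pj _ _) (leq_trans (ltn_ord j) le_s_k).
rewrite [RHS]mxE -(colloc_A_exact _ i size_P) mxE.
by apply: eq_bigr => m _; rewrite !mxE.
Qed.

End Interpolation.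

Theorem theorem4p2 (R : rcfType) (k s : nat) (tau : 'I_k -> R)
  (hs : (1 <= s)%N) (hsk : (s <= k)%N)
  (htau_inj : injective tau)
  (htau01 : forall i, 0 <= tau i <= 1)
  (hexact : quad_exact tau (2 * s - 1)) :
  colloc_A tau *m Pmat s tau *m (Pmat s tau)^T *m Omega tau
  = Imat s tau *m (Pmat s tau)^T *m Omega tau.
Proof. by rewrite colloc_A_mul_Pmat. Qed.
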